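(* Let $S$ be a solid and let $P=\{x\in S: e(x)=0\}$ be the set of precise elements. Then $P$, with the restrictions of $+$, $\cdot$ and $\le$, is an ordered field with zero $0$ and unit $1$.
   Context: A solid is a set $S$ with two binary operations $+$ and $\cdot$ (written $xy$) and a binary relation $\le$ satisfying the following axioms (all variables range over $S$). (A1) $+$ is associative and commutative. (A2) For each $x$ there is $e$ with $x+e=x$ such that $e+f=e$ for every $f$ with $x+f=x$; this $e$ is unique and is denoted $e(x)$ (the magnitude of $x$). An element $x$ with $x=e(x)$ is called a magnitude. (A3) For each $x$ there is $s$ with $x+s=e(x)$ and $e(s)=e(x)$; it is unique and denoted $-x$; write $x-y$ for $x+(-y)$. (A4) $e(x+y)=e(x)$ or $e(x+y)=e(y)$. (M1) $\cdot$ is associative and commutative. (M2) For each $x\neq e(x)$ there is $u$ with $xu=x$ such that $uv=u$ for every $v$ with $xv=x$; it is unique and denoted $u(x)$. (M3) For each $x\ne e(x)$ there is $d$ with $xd=u(x)$ and $u(d)=u(x)$; it is unique and denoted $x^{-1}$; write $y/x$ for $yx^{-1}$. (M4) If $x\neq e(x)$ and $y\ne e(y)$ then $u(xy)=u(x)$ or $u(xy)=u(y)$. (O1) $\le$ is a total order (reflexive, antisymmetric, transitive, total); $x<y$ means $x\le y$ and $x\ne y$. (O2) $x\le y\Rightarrow x+z\le y+z$. (O3) $y+e(x)=e(x)\Rightarrow (y\le e(x)$ and $-y\le e(x))$. (O4) $(e(x)<x$ and $y\le z)\Rightarrow xy\le xz$. (O5) $e(y)\le y\le z\Rightarrow e(x)y\le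 e(x)z$. (AM1) For all $x,y$ there is $z$ with $e(x)y=e(z)$. (AM2) $e(xy)=e(x)y+e(y)x$. (AM3) If $x\ne e(x)$ then $e(u(x))=e(x)/x$. (AM4) (distributivity axiom) $xy+xz=x(y+z)+e(x)y+e(x)z$. (AM5) $-(xy)=(-x)y$. (E1) There is $m$ with $m+x=x$ for all $x$; it is unique, called zero and denoted $0$. (E2) There is $u$ with $ux=x$ for all $x$; it is unique, called one and denoted $1$. (E3) There is $M$ with $e(x)+M=M$ for all $x$. (E4) There is $x$ with $e(x)\ne 0$ and $e(x)\ne M$. (E5) For every $x$ there is $a$ with $x=a+e(x)$ and $e(a)=0$. (E6) If $x,y$ are magnitudes with $x<y$, there is $z$ with $z\ne e(z)$ and $x<z<y$. Further notation: $S^*=\{x\in S: x\ne e(x)\}$ (zeroless elements). $x$ is positive if $e(x)\le x$ and negative if $x<e(x)$; $|x|=x$ if $x$ is positive and $|x|=-x$ if $x$ is negative. $x$ is precise if $e(x)=0$. The relative uncertainty $R(x)$ is $e(u(x))$ if $x\ne e(x)$, and $M$ (from (E3)) if $x=e(x)$. *)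

Set Implicit Arguments.

(* The derived operations e, -, u, ^{-1} of axioms (A2),(A3),(M2),(M3)
   are included as functions together with their defining properties (including
   the uniqueness asserted in the axioms).  u and inv are only constrained on
   zeroless elements (x <> e x). *)
Record Solid := {
  carrier :> Type;
  add : carrier -> carrier -> carrier;
  mul : carrier -> carrier -> carrier;
  le  : carrier -> carrier -> Prop;
  e   : carrier -> carrier;
  opp : carrier -> carrier;
  u   : carrier -> carrier;
  inv : carrier -> carrier;
  zero : carrier;
  one : carrier;
  bigM : carrier;
  A1_assoc : forall x y z, add x (add y z) = add (add x y) z;
  A1_comm : forall x y, add x y = add y x;
  A2_neutral : forall x, add x (e x) = x;
  A2_min : forall x f, add x f = x -> add (e x) f = e x;
  A2_unique : forall x e', add x e' = x -> (forall f, add x f = x -> add e' f = e') -> e' = e x;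
  A3_opp : forall x, add x (opp x) = e x /\ e (opp x) = e x;
  A3_unique : forall x s, add x s = e x -> e s = e x -> s = opp x;
  A4 : forall x y, e (add x y) = e x \/ e (add x y) = e y;
  M1_assoc : forall x y z, mul x (mul y z) = mul (mul x y) z;
  M1_comm : forall x y, mul x y = mul y x;
  M2_neutral : forall x, x <> e x -> mul x (u x) = x;
  M2_min : forall x v, x <> e x -> mul x v = x -> mul (u x) v = u x;
  M2_unique : forall x u', x <> e x -> mul x u' = x ->
      (forall v, mul x v = x -> mul u' v = u') -> u' = u x;
  M3_inv : forall x, x <> e x -> mul x (inv x) = u x /\ u (inv x) = u x;
  M3_unique : forall x d, x <> e x -> mul x d = u x -> u d = u x -> d = inv x;
  M4 : forall x y, x <> e x -> y <> e y -> u (mul x y) = u x \/ u (mul x y) = u y;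
  O1_refl : forall x, le x x;
  O1_antisym : forall x y, le x y -> le y x -> x = y;
  O1_trans : forall x y z, le x y -> le y z -> le x z;
  O1_total : forall x y, le x y \/ le y x;
  O2 : forall x y z, le x y -> le (add x z) (add y z);
  O3 : forall x y, add y (e x) = e x -> le y (e x) /\ le (opp y) (e x);
  O4 : forall x y z, (le (e x) x /\ e x <> x) -> le y z -> le (mul x y) (mul x z);
  O5 : forall x y z, le (e y) y -> le y z -> le (mul (e x) y) (mul (e x) z);
  AM1 : forall x y, exists z, mul (e x) y = e z;
  AM2 : forall x y, e (mul x y) = add (mul (e x) y) (mul (e y) x);
  AM3 : forall x, x <> e x -> e (u x) = mul (e x) (inv x);
  AM4 : forall x y z, add (mul x y) (mul x z)
        = add (add (mul x (add y z)) (mul (e x) y)) (mul (e x) z);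
  AM5 : forall x y, opp (mul x y) = mul (opp x) y;
  E1 : forall x, add zero x = x;
  E2 : forall x, mul one x = x;
  E3 : forall x, add (e x) bigM = bigM;
  E4 : exists x, e x <> zero /\ e x <> bigM;
  E5 : forall x, exists a, x = add a (e x) /\ e a = zero;
  E6 : forall x y, x = e x -> y = e y -> (le x y /\ x <> y) ->
        exists z, z <> e z /\ (le x z /\ x <> z) /\ (le z y /\ z <> y)
}.

Definition is_ordered_field {T : Type} (P : T -> Prop)
  (add mul : T -> T -> T) (le : T -> T -> Prop) (z o : T) : Prop :=
  P z /\ P o /\
  (forall x y, P x -> P y -> P (add x y)) /\
  (forall x y, P x -> P y -> P (mul x y)) /\
  (forall x y w, P x -> P y -> P w -> add x (add y w) = add (add x y) w) /\
  (forall x y, P x -> P y -> add x y = add y x) /\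
  (forall x, P x -> add z x = x) /\
  (forall x, P x -> exists y, P y /\ add x y = z) /\
  (forall x y w, P x -> P y -> P w -> mul x (mul y w) = mul (mul x y) w) /\
  (forall x y, P x -> P y -> mul x y = mul y x) /\
  (forall x, P x -> mul o x = x) /\
  (forall x, P x -> x <> z -> exists y, P y /\ mul x y = o) /\
  (forall x y w, P x -> P y -> P w -> mul x (add y w) = add (mul x y) (mul x w)) /\
  z <> o /\
  (forall x, P x -> le x x) /\
  (forall x y, P x -> P y -> le x y -> le y x -> x = y) /\
  (forall x y w, P x -> P y -> P w -> le x y -> le y w -> le x w) /\
  (forall x y, P x -> P y -> le x y \/ le y x) /\
  (forall x y w, P x -> P y -> P w -> le x y -> le (add x w) (add y w)) /\
  (forall x y, P x -> P y -> le z x -> le z y -> le z (mul x y)).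

Definition precise (S : Solid) (x : S) : Prop := e S x = zero S.

From Stdlib Require Import Classical.

(* Everything hinges on [e 1 = 0].  Writing [1 = b + e 1] with [b] precise
   (E5), axiom (O5) squeezes [e 1] between [0] and [e 1 * (b + b)], and the
   latter vanishes because [e 1 * y = 0] for precise [y] (AM2 applied to
   [1 * y]).  Then (A4) and (AM2) make the precise elements closed under [+]
   and [*], (AM4) collapses to distributivity, and the additive group, order
   and monotonicity axioms are inherited.  For inverses, the unit [u x] of a
   precise [x <> 0] is shown to be a precise nonzero idempotent; such an
   idempotent [p] equals [1], for [p] and [1 - p] are both squares, hence
   nonnegative, with product [0], so the smaller of the two must vanish. *)

Declare Scope solid_scope.

Section PreciseElements.

Variable S : Solid.

Local Notation "0" := (zero S) : solid_scope.
Local Notation "1" := (one S) : solid_scope.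
Local Notation "x + y" := (add S x y) : solid_scope.
Local Notation "x * y" := (mul S x y) : solid_scope.
Local Notation "- x" := (opp S x) : solid_scope.
Local Notation "x <= y" := (le S x y) : solid_scope.
Local Notation e := (e S).
Local Notation u := (u S).
Local Notation inv := (inv S).
Local Open Scope solid_scope.

Lemma addr0 (x : S) : x + 0 = x.
Proof. rewrite A1_comm; apply E1. Qed.

Lemma mulr1 (x : S) : x * 1 = x.
Proof. rewrite M1_comm; apply E2. Qed.

Lemma mag_add_self (x : S) : e x + e x = e x.
Proof. apply A2_min, A2_neutral. Qed.

Lemma mag_mag (x : S) : e (e x) = e x.
Proof. symmetry; apply A2_unique; [apply mag_add_self | auto]. Qed.

Lemma mag0 : e 0 = 0.
Proof. rewrite <- (E1 S (e 0)); apply A2_neutral. Qed.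

Lemma mag_ge0 (x : S) : 0 <= e x.
Proof. apply (O3 S x 0), E1. Qed.

Lemma mag_mulmag (x y : S) : e (e x * y) = e x * y.
Proof. destruct (AM1 S x y) as [z ->]; apply mag_mag. Qed.

Lemma opp_mag (x : S) : - e x = e x.
Proof. symmetry; apply A3_unique; [rewrite mag_mag; apply mag_add_self | reflexivity]. Qed.

Lemma opp0 : - 0 = 0.
Proof. generalize (opp_mag 0); rewrite mag0; auto. Qed.

Lemma oppK (x : S) : - - x = x.
Proof.
  destruct (A3_opp S x) as [addrN mag_opp].
  symmetry; apply A3_unique; [rewrite A1_comm, addrN, mag_opp | symmetry]; auto.
Qed.

Lemma mag_opp (x : S) : e (- x) = e x.
Proof. apply A3_opp. Qed.

Lemma addrN (x : S) : x + - x = e x.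
Proof. apply A3_opp. Qed.

Lemma precise_add_fixed (y f : S) : e y = 0 -> y + f = y -> f = 0.
Proof. intros y_precise yf_y; generalize (A2_min S f yf_y); rewrite y_precise, E1; auto. Qed.

Lemma mag_add_eq0 (m n : S) : e m = m -> e n = n -> m + n = 0 -> m = 0.
Proof.
  intros m_mag n_mag mn0; apply O1_antisym; [|rewrite <- m_mag; apply mag_ge0].
  generalize (O2 S 0 n m); rewrite E1, A1_comm, mn0.
  intros H; apply H; rewrite <- n_mag; apply mag_ge0.
Qed.

Lemma nonneg_oppr (a : S) : e a = 0 -> a <= 0 -> 0 <= - a.
Proof.
  intros a_precise a_le0; generalize (O2 S a 0 (- a) a_le0).
  rewrite addrN, a_precise, E1; auto.
Qed.

(* By (AM2), if [1] were a magnitude then so would be every element, against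
   (E4) and the density axiom (E6). *)
Lemma one_not_mag : 1 <> e 1.
Proof.
  intro one_mag.
  assert (all_mag : forall x : S, e x = x).
  { intro x; generalize (AM2 S 1 x).
    rewrite E2, <- one_mag, E2, mulr1; intros ->; apply A2_neutral. }
  destruct (E4 S) as [x0 [x0_nonzero _]].
  destruct (E6 S (x:=0) (y:=e x0)) as [z [z_zeroless _]].
  - rewrite mag0; reflexivity.
  - rewrite mag_mag; reflexivity.
  - split; [apply mag_ge0 | intro; apply x0_nonzero; symmetry; auto].
  - apply z_zeroless; symmetry; apply all_mag.
Qed.

Lemma mag1_mul_precise (y : S) : e y = 0 -> e 1 * y = 0.
Proof.
  intro y_precise; generalize (AM2 S 1 y).
  rewrite E2, y_precise, mulr1, addr0; auto.
Qed.

Lemma mag1_eq0_of_shift (c w : S) :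
  e c = 0 -> 0 <= c -> w = c + e 1 -> e w = e 1 -> w <> e w -> e 1 * w = e 1 ->
  e 1 = 0.
Proof.
  intros c_precise c_ge0 w_def mag_w w_zeroless mag1_w.
  assert (mag1_le_w : e 1 <= w).
  { rewrite w_def; generalize (O2 S 0 c (e 1) c_ge0); rewrite E1; auto. }
  assert (mag1_le_c : e 1 <= c).
  { destruct (O1_total S (e 1) c) as [|c_le]; [assumption|].
    exfalso; apply w_zeroless; rewrite mag_w; apply O1_antisym; [|assumption].
    generalize (O2 S c (e 1) (e 1) c_le); rewrite <- w_def, mag_add_self; auto. }
  assert (w_le_cc : w <= c + c).
  { rewrite w_def, (A1_comm S c (e 1)); apply O2, mag1_le_c. }
  assert (cc_precise : e (c + c) = 0) by (destruct (A4 S c c) as [-> | ->]; auto).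
  apply O1_antisym; [|apply mag_ge0].
  generalize (O5 S 1 w (c + c)); rewrite mag1_w, mag1_mul_precise by auto.
  intros H; apply H; [rewrite mag_w |]; assumption.
Qed.

(* With [1 = b + e 1], apply the previous lemma to [w = 1] if [b >= 0], and to
   [w = - 1 = - b + e 1] otherwise. *)
Lemma precise1 : e 1 = 0.
Proof.
  destruct (E5 S 1) as [b [one_def b_precise]].
  destruct (O1_total S 0 b) as [b_ge0 | b_le0].
  - apply (mag1_eq0_of_shift b 1); auto using one_not_mag, mulr1.
  - assert (nb_precise : e (- b) = 0) by (rewrite mag_opp; auto).
    destruct (A4 S (- b) (e 1)) as [mag_sum | mag_sum].
    + apply (precise_add_fixed (- b + e 1)); [rewrite mag_sum; auto|].
      rewrite <- A1_assoc, mag_add_self; reflexivity.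
    + assert (opp1 : - (1) = - b + e 1).
      { symmetry; apply A3_unique; [|rewrite mag_sum; apply mag_mag].
        transitivity (b + e 1 + (- b + e 1)); [f_equal; assumption|].
        rewrite <- A1_assoc, (A1_assoc S (e 1) (- b) (e 1)), (A1_comm S (e 1) (- b)),
          <- (A1_assoc S (- b) (e 1) (e 1)), mag_add_self, A1_assoc, addrN,
          b_precise, E1; reflexivity. }
      apply (mag1_eq0_of_shift (- b) (- (1))); auto using nonneg_oppr.
      * rewrite mag_opp; reflexivity.
      * rewrite mag_opp; intro opp1_mag; apply one_not_mag.
        rewrite <- (oppK 1), opp1_mag, opp_mag, mag_mag; reflexivity.
      * rewrite M1_comm, <- AM5, E2, opp_mag; reflexivity.
Qed.

Lemma mul0r_precise (y : S) : e y = 0 -> 0 * y = 0.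
Proof. intro y_precise; generalize (mag1_mul_precise y y_precise); rewrite precise1; auto. Qed.

Lemma mulr0_precise (y : S) : e y = 0 -> y * 0 = 0.
Proof. rewrite M1_comm; apply mul0r_precise. Qed.

Lemma precise_add (x y : S) : e x = 0 -> e y = 0 -> e (x + y) = 0.
Proof. destruct (A4 S x y) as [-> | ->]; auto. Qed.

Lemma precise_mul (x y : S) : e x = 0 -> e y = 0 -> e (x * y) = 0.
Proof. intros x_precise y_precise; rewrite AM2, x_precise, y_precise, !mul0r_precise; auto using E1. Qed.

Lemma mulrDr_precise (x y z : S) : e x = 0 -> e y = 0 -> e z = 0 ->
  x * (y + z) = x * y + x * z.
Proof. intros x_precise **; rewrite AM4, x_precise, !mul0r_precise, !addr0; auto. Qed.

Lemma mul_ge0_precise (x y : S) : e x = 0 -> e y = 0 -> 0 <= x -> 0 <= y -> 0 <= x * y.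
Proof.
  intros x_precise y_precise x_ge0 y_ge0.
  destruct (classic (x = 0)) as [-> | x_neq0].
  - rewrite mul0r_precise by auto; apply O1_refl.
  - generalize (O4 S (x:=x) 0 y); rewrite mulr0_precise by auto.
    intros H; apply H; [rewrite x_precise |]; auto.
Qed.

Lemma sqr_ge0_precise (a : S) : e a = 0 -> 0 <= a * a.
Proof.
  intro a_precise.
  destruct (O1_total S 0 a) as [a_ge0 | a_le0]; [apply mul_ge0_precise; auto|].
  replace (a * a) with (- a * - a)
    by (rewrite <- AM5, M1_comm, <- AM5, oppK; reflexivity).
  assert (e (- a) = 0) by (rewrite mag_opp; auto).
  apply mul_ge0_precise; auto using nonneg_oppr.
Qed.

Lemma precise_idem_eq1 (p : S) : e p = 0 -> p * p = p -> p <> 0 -> p = 1.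
Proof.
  intros p_precise pp_p p_neq0.
  set (f := 1 + - p).
  assert (f_precise : e f = 0)
    by (apply precise_add; [apply precise1 | rewrite mag_opp; auto]).
  assert (pf0 : p * f = 0).
  { unfold f; rewrite mulrDr_precise, mulr1, M1_comm, <- AM5, pp_p, addrN;
      auto using precise1; rewrite mag_opp; auto. }
  assert (ff_f : f * f = f).
  { change (f * (1 + - p) = f); rewrite mulrDr_precise, mulr1, M1_comm, <- AM5, pf0, opp0, addr0;
      auto using precise1; rewrite mag_opp; auto. }
  assert (p_ge0 : 0 <= p) by (rewrite <- pp_p; apply sqr_ge0_precise; auto).
  assert (f_ge0 : 0 <= f) by (rewrite <- ff_f; apply sqr_ge0_precise; auto).
  destruct (O1_total S p f) as [p_le_f | f_le_p].
  - exfalso; apply p_neq0, O1_antisym; [|assumption].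
    rewrite <- pp_p, <- pf0; apply O4; [rewrite p_precise; auto | assumption].
  - destruct (classic (f = 0)) as [f0 | f_neq0].
    + assert (f_add_p : f + p = p) by (rewrite f0; apply E1).
      unfold f in f_add_p.
      rewrite <- A1_assoc, (A1_comm S (- p) p), addrN, p_precise, addr0 in f_add_p.
      symmetry; assumption.
    + exfalso; apply f_neq0, O1_antisym; [|assumption].
      rewrite <- ff_f, <- pf0, (M1_comm S p f); apply O4; [rewrite f_precise; auto | assumption].
Qed.

Section PreciseInverse.

Variable x : S.
Hypotheses (x_precise : e x = 0) (x_neq0 : x <> 0).

Let x_zeroless : x <> e x.
Proof. rewrite x_precise; assumption. Qed.

Lemma mulr_unit : x * u x = x.
Proof. apply M2_neutral, x_zeroless. Qed.

Lemma mulrV_unit : x * inv x = u x.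
Proof. apply M3_inv, x_zeroless. Qed.

Lemma unit_inv : u (inv x) = u x.
Proof. apply M3_inv, x_zeroless. Qed.

Lemma mul0_inv : 0 * inv x = 0.
Proof.
  assert (mul0_unit : e x * u x = 0).
  { apply (mag_add_eq0 _ (e (u x) * x)); try apply mag_mulmag.
    rewrite <- AM2, mulr_unit; assumption. }
  rewrite x_precise in mul0_unit.
  transitivity (0 * x * inv x); [rewrite (mul0r_precise x x_precise); reflexivity|].
  rewrite <- M1_assoc, mulrV_unit; assumption.
Qed.

Lemma precise_unit : e (u x) = 0.
Proof. rewrite AM3, x_precise by apply x_zeroless; apply mul0_inv. Qed.

Lemma mag_inv_mulr : e (inv x) * x = 0.
Proof.
  apply (mag_add_eq0 _ (e x * inv x)); try apply mag_mulmag.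
  rewrite A1_comm, <- AM2, mulrV_unit; apply precise_unit.
Qed.

Lemma unit_neq0 : u x <> 0.
Proof.
  intro unit0; apply x_neq0.
  rewrite <- mulr_unit, unit0; apply mulr0_precise, x_precise.
Qed.

Lemma inv_zeroless : inv x <> e (inv x).
Proof.
  intro inv_mag; apply unit_neq0.
  rewrite <- mulrV_unit, inv_mag, M1_comm; apply mag_inv_mulr.
Qed.

Lemma precise_inv : e (inv x) = 0.
Proof.
  assert (inv_unit : inv x * u x = inv x)
    by (rewrite <- unit_inv; apply M2_neutral, inv_zeroless).
  rewrite <- inv_unit.
  rewrite AM2, precise_unit, mul0_inv, addr0, <- mulrV_unit, M1_assoc, mag_inv_mulr.
  apply mul0_inv.
Qed.

Lemma unit_eq1 : u x = 1.
Proof.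
  apply precise_idem_eq1; [apply precise_unit | | apply unit_neq0].
  apply M2_min, mulr_unit; apply x_zeroless.
Qed.

End PreciseInverse.

Lemma precise_mulrV (x : S) : e x = 0 -> x <> 0 -> exists y, e y = 0 /\ x * y = 1.
Proof.
  intros x_precise x_neq0; exists (inv x).
  rewrite mulrV_unit, unit_eq1; auto using precise_inv.
Qed.

End PreciseElements.

Theorem mainTheorem16 (S : Solid) :
  is_ordered_field (@precise S) (add S) (mul S) (le S) (zero S) (one S).
Proof.
  unfold is_ordered_field, precise.
  repeat split.
  - apply mag0.
  - apply precise1.
  - intros; apply precise_add; auto.
  - intros; apply precise_mul; auto.
  - intros; apply A1_assoc.
  - intros; apply A1_comm.
  - intros; apply E1.
  - intros x x_precise; exists (opp S x); rewrite mag_opp, addrN; auto.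
  - intros; apply M1_assoc.
  - intros; apply M1_comm.
  - intros; apply E2.
  - intros; apply precise_mulrV; auto.
  - intros; apply mulrDr_precise; auto.
  - intro zero_one; apply (one_not_mag S); rewrite precise1; auto.
  - intros; apply O1_refl.
  - intros; apply O1_antisym; auto.
  - intros x y w _ _ _; apply O1_trans.
  - intros; apply O1_total.
  - intros; apply O2; auto.
  - intros; apply mul_ge0_precise; auto.
Qed.
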